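(* Consider the remote-estimation model described in the context, and let the sensor use the always-transmit policy ($A_t = 1$ for all $t\ge 1$). Then the resulting Markov chain $\{S_t\}_{t\geq 1}$ on the state space $\mathcal{S}$ is irreducible and positive recurrent. Moreover, for every pair of states $s, s'\in\mathcal{S}$, the expected first passage time from $s$ to $s'$ is finite.
   Context: Model. A source $\{X_t\}_{t\ge1}$ is a homogeneous discrete-time Markov chain on $\mathcal{X}=\{1,\dots,M\}$ with irreducible transition matrix $Q=(Q_{i,j})$, $Q_{i,j}=\Pr[X_{t+1}=j\mid X_t=i]$. Let $\mathcal{X}_{\rm ap}=\{i: Q_{i,i}>0\}$ and $\mathcal{X}_{\rm p}=\mathcal{X}\setminus\mathcal{X}_{\rm ap}$; it is assumed $\mathcal{X}_{\rm ap}\neq\emptyset$. At each time $t$ a sensor chooses $A_t\in\{0,1\}$ (1 = transmit). The channel is an i.i.d. Bernoulli process $H_t$ with $\Pr[H_t=1]=p_s$, $\Pr[H_t=0]=p_f=1-p_s$, independent of the source. The receiver's estimate evolves as $\hat X_{t+1}=X_t$ if $A_t=1$ and $H_t=1$, and $\hat X_{t+1}=\hat X_t$ otherwise. The Age of Consecutive Error (AoCE) is $\Delta_t=\Delta_{t-1}+1$ if $X_t\ne\hat X_t$ and $(X_t,\hat X_t)=(X_{t-1},\hat X_{t-1})$; $\Delta_t=1$ if $X_t\neq \hat X_t$ and $(X_t,\hat X_t)\ne(X_{t-1},\hat X_{t-1})$; $\Delta_t=0$ if $X_t=\hat X_t$. The system state is $S_t=(X_t,\hat X_t,\Delta_t)$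 with state space $\mathcal{S}=\{(i,i,0):i\in\mathcal{X}\}\cup\{(i,j,\delta): i\ne j, i\in\mathcal{X}_{\rm ap},\delta\ge1\}\cup\{(i,j,1): i\neq j, i\in\mathcal{X}_{\rm p}\}$. Transition probabilities $P_{s,s'}(a)=\Pr[S_{t+1}=s'\mid S_t=s,A_t=a]$: for $s=(i,j,\delta)$, $i\ne j$, under $a=0$: to $(i,j,\delta+1)$ w.p. $Q_{i,i}$, to $(j,j,0)$ w.p. $Q_{i,j}$, to $(k,j,1)$ w.p. $Q_{i,k}$ for $k\ne i,j$; under $a=1$: to $(i,i,0)$ w.p. $Q_{i,i}p_s$, to $(k,i,1)$ w.p. $Q_{i,k}p_s$ for $k\ne i$, to $(i,j,\delta+1)$ w.p. $Q_{i,i}p_f$, to $(j,j,0)$ w.p. $Q_{i,j}p_f$, to $(k,j,1)$ w.p. $Q_{i,k}p_f$ for $k\ne i,j$. For $s=(i,i,0)$ and either action: to $(i,i,0)$ w.p. $Q_{i,i}$ and to $(k,i,1)$ w.p. $Q_{i,k}$ for $k\ne i$. *)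

From HB Require Import structures.
From mathcomp Require Import all_boot all_order all_algebra.
From mathcomp Require Import boolp classical_sets reals constructive_ereal ereal topology sequences.
Set Implicit Arguments. Unset Strict Implicit. Unset Printing Implicit Defensive.
Import Order.TTheory GRing.Theory Num.Theory.
Local Open Scope ring_scope.

(* Generic notions for a discrete-time Markov chain on a type T with   *)
(* transition kernel K : T -> T -> R whose one-step support from s is  *)
(* contained in the finite list sup s (i.e. K s u = 0 if u \notin sup s)*)
Section MarkovChain.
Variables (R : realType) (T : eqType) (K : T -> T -> R) (sup : T -> seq T).

Fixpoint n_step (n : nat) (s t : T) : R :=
  match n with
  | 0 => (s == t)%:R
  | n'.+1 => \sum_(u <- undup (sup s)) K s u * n_step n' u t
  end.

Fixpoint first_passage (n : nat) (s t : T) : R :=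
  match n with
  | 0 => 0
  | 1 => K s t
  | n'.+1 => \sum_(u <- undup (sup s) | u != t) K s u * first_passage n' u t
  end.

Definition hit_prob (s t : T) : \bar R :=
  (\sum_(n <oo) (first_passage n s t)%:E)%E.

(* expected first passage time E_s[tau_t], tau_t = min{m >= 1 : S_m = t};
   it is +oo when tau_t = +oo with positive probability *)
Definition mean_first_passage (s t : T) : \bar R :=
  if hit_prob s t == 1%E then (\sum_(n <oo) (n%:R * first_passage n s t)%:E)%E
  else +oo%E.

Definition irreducible_on (S : pred T) : Prop :=
  forall s t, S s -> S t -> exists n, 0 < n_step n s t.

Definition positive_recurrent_state (s : T) : Prop :=
  hit_prob s s = 1%E /\ (mean_first_passage s s < +oo)%E.

Definition positive_recurrent_on (S : pred T) : Prop :=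
  forall s, S s -> positive_recurrent_state s.

End MarkovChain.

Definition stochastic_mx (R : realType) (M : nat) (Q : 'M[R]_M) : Prop :=
  (forall i j, 0 <= Q i j) /\ (forall i, \sum_j Q i j = 1).

Definition irreducible_mx (R : realType) (M : nat) (Q : 'M[R]_M) : Prop :=
  forall i j, exists n, 0 < (Q ^+ n) i j.

(* The AoCE system state S_t = (X_t, hat X_t, Delta_t)                  *)
Definition aoce_state (M : nat) := ('I_M * 'I_M * nat)%type.

Definition valid_state (R : realType) (M : nat) (Q : 'M[R]_M)
  (s : aoce_state M) : bool :=
  let '(i, j, d) := s in
  ((i == j) && (d == 0%N)) ||
  [&& i != j, (0 < d)%N & (0 < Q i i) || (d == 1%N)].

Definition P_transmit (R : realType) (M : nat) (Q : 'M[R]_M) (ps : R)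
  (s t : aoce_state M) : R :=
  let pf := 1 - ps in
  let '(i, j, d) := s in
  if i == j then
    (t == (i, i, 0%N))%:R * Q i i
    + \sum_(k | k != i) (t == (k, i, 1%N))%:R * Q i k
  else
    (t == (i, i, 0%N))%:R * (Q i i * ps)
    + \sum_(k | k != i) (t == (k, i, 1%N))%:R * (Q i k * ps)
    + (t == (i, j, d.+1))%:R * (Q i i * pf)
    + (t == (j, j, 0%N))%:R * (Q i j * pf)
    + \sum_(k | (k != i) && (k != j)) (t == (k, j, 1%N))%:R * (Q i k * pf).

Definition aoce_succ (M : nat) (s : aoce_state M) : seq (aoce_state M) :=
  let '(i, j, d) := s in
  [:: (i, i, 0%N); (i, j, d.+1); (j, j, 0%N)]
  ++ [seq (k, i, 1%N) | k <- enum 'I_M]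
  ++ [seq (k, j, 1%N) | k <- enum 'I_M].

From mathcomp Require Import all_boot all_order all_algebra.
From mathcomp Require Import boolp classical_sets reals constructive_ereal ereal.
From mathcomp Require Import sequences normedtype.
From mathcomp Require Import lra ring.
From Stdlib Require Import Relation_Operators Operators_Properties.
Set Implicit Arguments. Unset Strict Implicit. Unset Printing Implicit Defensive.
Import Order.TTheory GRing.Theory Num.Theory.
Import numFieldNormedType.Exports.
Local Open Scope classical_set_scope.
Local Open Scope ring_scope.

(* Under the always-transmit policy every state moves in one step, with probability at least
   [ps / M], to one of the finitely many states [fresh_state k i] (a successful delivery
   while the source jumps to a likely value [k]), and from each of them every valid state
   is reachable. Hence, for a fixed target [t], there are [N] and [c < 1] such that from
   every state the chain avoids [t] during [N] steps with probability at most [c]. Then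
   Pr[tau_t > k N] <= c ^ k, so [tau_t] is finite almost surely and
   E[tau_t] = sum_n Pr[tau_t > n] <= N / (1 - c). *)

Section FirstPassage.
Variables (R : realType) (T : eqType) (K : T -> T -> R) (sup : T -> seq T).

(* [avoid_prob t n s] is the probability, starting from [s], of not visiting [t] at times [1..n]. *)
Fixpoint avoid_prob (t : T) (n : nat) (s : T) : R :=
  match n with
  | 0 => 1
  | n'.+1 => \sum_(u <- undup (sup s) | u != t) K s u * avoid_prob t n' u
  end.

Definition reachable : T -> T -> Prop := clos_refl_trans T (fun s u => 0 < K s u).

Hypothesis K_ge0 : forall s u, 0 <= K s u.
Hypothesis K_sum1 : forall s, \sum_(u <- undup (sup s)) K s u = 1.
Hypothesis K_supp : forall s u, u \notin sup s -> K s u = 0.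
Local Hint Resolve K_ge0 : core.

Lemma K_sum1_split s t : K s t + \sum_(u <- undup (sup s) | u != t) K s u = 1.
Proof.
rewrite -(K_sum1 s); case: (boolP (t \in sup s)) => [ts | /[dup] /K_supp -> tNs].
  by rewrite [RHS](bigD1_seq t) ?undup_uniq ?mem_undup.
rewrite add0r [RHS]big_seq_cond [LHS]big_seq_cond; apply: eq_bigl => u.
by case: (eqVneq u t) => [-> | _]; rewrite ?mem_undup ?(negbTE tNs) ?andbT.
Qed.

Lemma avoid_prob_ge0 t n s : 0 <= avoid_prob t n s.
Proof.
elim: n s => [|n IH] s /=; first exact: ler01.
by apply: sumr_ge0 => u _; apply: mulr_ge0.
Qed.
Local Hint Resolve avoid_prob_ge0 : core.

Lemma avoid_prob_le1 t n s : avoid_prob t n s <= 1.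
Proof.
elim: n s => [//|n IH] s /=.
rewrite -(K_sum1_split s t) ler_wpDl //; apply: ler_sum => u _.
by rewrite ler_piMr.
Qed.

Lemma hit_within_succ t n s :
  1 - avoid_prob t n.+1 s =
  K s t + \sum_(u <- undup (sup s) | u != t) K s u * (1 - avoid_prob t n u).
Proof.
rewrite /= -{1}(K_sum1_split s t) -addrA -sumrB; congr (_ + _).
by apply: eq_bigr => u _; rewrite mulrBr mulr1.
Qed.

Lemma first_passage_avoid_prob t n s :
  first_passage K sup n.+1 s t = avoid_prob t n s - avoid_prob t n.+1 s.
Proof.
elim: n s => [|n IH] s.
  rewrite [avoid_prob t 0 s]/= hit_within_succ big1 ?addr0 // => u _.
  by rewrite subrr mulr0.
have -> : first_passage K sup n.+2 s t =
    \sum_(u <- undup (sup s) | u != t) K s u * first_passage K sup n.+1 u t by [].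
rewrite [avoid_prob t n.+2 s]/= [avoid_prob t n.+1 s]/= -sumrB.
by apply: eq_bigr => u _; rewrite IH mulrBr.
Qed.

Lemma avoid_prob_succ_le t n s : avoid_prob t n.+1 s <= avoid_prob t n s.
Proof.
elim: n s => [|n IH] s; first exact: avoid_prob_le1.
by apply: ler_sum => u _; apply: ler_wpM2l; [|exact: IH].
Qed.

Lemma avoid_prob_antimono t s m n : (m <= n)%N -> avoid_prob t n s <= avoid_prob t m s.
Proof. by move=> mn; have /nonincreasing_seqP/(_ m n mn) := avoid_prob_succ_le t ^~ s. Qed.

Lemma hit_within_succ_ge t n s u :
  K s u * (1 - avoid_prob t n u) <= 1 - avoid_prob t n.+1 s.
Proof.
have hit_ge0 v : 0 <= 1 - avoid_prob t n v by rewrite subr_ge0 avoid_prob_le1.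
have [uNs | us] := boolP (u \notin sup s).
  by rewrite K_supp // mul0r subr_ge0 avoid_prob_le1.
rewrite hit_within_succ; case: (eqVneq u t) => [-> | ut].
  by rewrite ler_wpDr ?sumr_ge0 // => [v _|]; rewrite ?mulr_ge0 // ler_piMr // lerBlDr lerDl.
rewrite ler_wpDl // big_mkcond (bigD1_seq u) ?undup_uniq ?mem_undup ?(negPn us) //= ut.
by rewrite lerDl sumr_ge0 // => v _; case: ifP => // _; rewrite mulr_ge0.
Qed.

Lemma avoid_prob_addn_le t m c n s : (forall u, avoid_prob t m u <= c) ->
  avoid_prob t (n + m) s <= avoid_prob t n s * c.
Proof.
move=> hc; elim: n s => [|n IH] s; first by rewrite add0n mul1r.
by rewrite addSn [X in _ <= X]/= mulr_suml; apply: ler_sum => u _; rewrite -mulrA ler_wpM2l.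
Qed.

Lemma avoid_prob_geometric t N c k s : (forall u, avoid_prob t N u <= c) ->
  avoid_prob t (k * N) s <= c ^+ k.
Proof.
move=> hc; have c_ge0 : 0 <= c := le_trans (avoid_prob_ge0 t N s) (hc s).
elim: k s => [|k IH] s; first by rewrite mul0n expr0.
rewrite mulSn addnC exprSr; apply: le_trans (avoid_prob_addn_le _ _ hc) _.
by rewrite ler_wpM2r.
Qed.

Lemma n_step_ge0 n s t : 0 <= n_step K sup n s t.
Proof.
elim: n s => [|n IH] s /=; first by rewrite ler0n.
by apply: sumr_ge0 => u _; rewrite mulr_ge0.
Qed.

Lemma n_step_succ_ge n s u t : K s u * n_step K sup n u t <= n_step K sup n.+1 s t.
Proof.
have [uNs | us] := boolP (u \notin sup s); first by rewrite K_supp // mul0r n_step_ge0.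
rewrite /= (bigD1_seq u) ?undup_uniq ?mem_undup ?(negPn us) //= lerDl.
by rewrite sumr_ge0 // => v _; rewrite mulr_ge0 ?n_step_ge0.
Qed.

Lemma reachable_n_step_gt0 s t : reachable s t -> exists n, 0 < n_step K sup n s t.
Proof.
move=> st; elim: (clos_rt_rt1n _ _ _ _ st) => [u | s' u t' su _ [n hn]].
  by exists 0%N; rewrite /= eqxx ltr01.
by exists n.+1; apply: lt_le_trans (n_step_succ_ge n s' u t'); rewrite mulr_gt0.
Qed.

Lemma reachable_avoid_prob_lt1 u t : reachable u t ->
  forall s, 0 < K s u -> exists N, avoid_prob t N s < 1.
Proof.
have step t' s v n : 0 < K s v -> avoid_prob t' n v < 1 -> avoid_prob t' n.+1 s < 1.
  move=> sv vt; rewrite -subr_gt0; apply: lt_le_trans (hit_within_succ_ge _ _ _ v).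
  by rewrite mulr_gt0 // subr_gt0.
move=> ut; elim: (clos_rt_rt1n _ _ _ _ ut) => [v | v w t' vw _ IH] s sv.
  exists 1%N; rewrite -subr_gt0 hit_within_succ big1 ?addr0 // => w _.
  by rewrite subrr mulr0.
by have [N hN] := IH _ vw; exists N.+1; apply: step sv hN.
Qed.

Lemma avoid_prob_uniform_bound (I : finType) (w : I -> T) (d : R) t :
  0 < d -> (forall u, exists i, d <= K u (w i)) ->
  (forall i, exists N, avoid_prob t N (w i) < 1) ->
  exists N c, c < 1 /\ forall u, avoid_prob t N u <= c.
Proof.
move=> d_gt0 to_w /fin_all_exists [Nw hNw].
pose N := \max_i Nw i; pose e := \prod_i (1 - avoid_prob t N (w i)).
have hit_gt0 i : 0 < 1 - avoid_prob t N (w i).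
  by rewrite subr_gt0 (le_lt_trans _ (hNw i)) // avoid_prob_antimono // leq_bigmax.
(* The product of the finitely many hitting probabilities is a common positive lower bound. *)
have e_gt0 : 0 < e by apply: prodr_gt0 => i _.
have e_le i : e <= 1 - avoid_prob t N (w i).
  rewrite /e (bigD1 i) //= ler_piMr ?(ltW (hit_gt0 i)) //; apply: prodr_ile1 => j _.
  by rewrite ltW ?hit_gt0 //= lerBlDr lerDl.
exists N.+1, (1 - d * e); split=> [|u]; first by rewrite ltrBlDr ltrDl mulr_gt0.
have [i hi] := to_w u.
suff : d * e <= 1 - avoid_prob t N.+1 u by lra.
apply: le_trans (hit_within_succ_ge t N u (w i)).
by apply: ler_pM; [exact: ltW | exact: ltW | exact: hi | exact: e_le].
Qed.

Lemma first_passage_ge0 n s t : 0 <= first_passage K sup n s t.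
Proof. by case: n => // n; rewrite first_passage_avoid_prob subr_ge0 avoid_prob_succ_le. Qed.

Lemma sum_first_passage n s t :
  \sum_(0 <= i < n.+1) first_passage K sup i s t = 1 - avoid_prob t n s.
Proof.
elim: n => [|n IH]; first by rewrite big_nat1 /= subrr.
by rewrite big_nat_recr // IH first_passage_avoid_prob /= addrA subrK.
Qed.

Lemma sum_mul_first_passage n s t :
  \sum_(0 <= i < n.+1) i%:R * first_passage K sup i s t =
  \sum_(0 <= i < n) avoid_prob t i s - n%:R * avoid_prob t n s.
Proof.
elim: n => [|n IH]; first by rewrite big_nat1 big_geq // !mul0r subr0.
by rewrite big_nat_recr // IH first_passage_avoid_prob big_nat_recr //= -natr1; ring.
Qed.

Section UniformAvoidBound.
Variables (t : T) (N : nat) (c : R).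
Hypothesis avoid_le_c : forall u, avoid_prob t N u <= c.
Hypothesis c_lt1 : c < 1.

(* The bound forces [0 <= c] and [0 < N] as soon as [T] is inhabited. *)
Let c_ge0 (s : T) : 0 <= c. Proof. exact: le_trans (avoid_prob_ge0 t N s) (avoid_le_c s). Qed.

Let N_gt0 (s : T) : (0 < N)%N.
Proof. by case: N avoid_le_c => // /(_ s) /= /le_lt_trans /(_ c_lt1); rewrite ltxx. Qed.

Lemma avoid_prob_cvg0 s : avoid_prob t n s @[n --> \oo] --> 0.
Proof.
apply/cvgrPdist_le => e e_gt0.
have c_norm_lt1 : `|c| < 1 by rewrite ger0_norm ?(c_ge0 s).
have /cvgrPdist_le /(_ e e_gt0) [k _ ck_le] := cvg_expr c_norm_lt1.
exists (k * N)%N => // n kN_le_n; rewrite /= sub0r normrN ger0_norm //.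
apply: le_trans (avoid_prob_antimono t s kN_le_n) _.
apply: le_trans (avoid_prob_geometric k s avoid_le_c) _.
by have := ck_le k (leqnn k); rewrite /= sub0r normrN ger0_norm // exprn_ge0 ?(c_ge0 s).
Qed.

Lemma hit_prob_eq1 s : hit_prob K sup s t = 1%E.
Proof.
have hit_cvg1 : (fun n => 1 - avoid_prob t n s) @ \oo --> (1 : R).
  by rewrite -[X in _ --> X]subr0; apply: cvgB; [exact: cvg_cst | exact: avoid_prob_cvg0].
have partial_cvg : (fun n => \sum_(0 <= i < n) first_passage K sup i s t) @ \oo --> (1 : R).
  rewrite -cvg_shiftS; apply: cvg_trans hit_cvg1; apply: near_eq_cvg; apply: nearW => n /=.
  by rewrite sum_first_passage.
rewrite /hit_prob.
have -> : (fun n => (\sum_(0 <= i < n) (first_passage K sup i s t)%:E)%E) =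
    EFin \o (fun n => \sum_(0 <= i < n) first_passage K sup i s t).
  by apply: funext => n /=; rewrite sumEFin.
by rewrite EFin_lim ?(cvg_lim _ partial_cvg) //; apply/cvg_ex; exists 1.
Qed.

Lemma sum_avoid_prob_blocks s k :
  (\sum_(0 <= i < k * N) avoid_prob t i s) * (1 - c) <= N%:R * (1 - c ^+ k).
Proof.
elim: k => [|k IH]; first by rewrite mul0n big_geq // mul0r expr0 subrr mulr0.
have block : \sum_(k * N <= i < k.+1 * N) avoid_prob t i s <= N%:R * c ^+ k.
  apply: le_trans (_ : \sum_(k * N <= i < k.+1 * N) c ^+ k <= _); last first.
    by rewrite sumr_const_nat mulSn addnK mulr_natl.
  rewrite !big_nat; apply: ler_sum => i /andP [kN_le_i _].
  exact: le_trans (avoid_prob_antimono t s kN_le_i) (avoid_prob_geometric k s avoid_le_c).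
rewrite (@big_cat_nat _ _ _ (k * N)) //=; last by rewrite leq_mul2r leqnSn orbT.
rewrite mulrDl; apply: le_trans (lerD IH (ler_wpM2r _ block)) _; first by rewrite subr_ge0 ltW.
by rewrite exprS le_eqVlt; apply/orP; left; apply/eqP; ring.
Qed.

Lemma sum_avoid_prob_le s L : \sum_(0 <= i < L) avoid_prob t i s <= N%:R / (1 - c).
Proof.
have c1_gt0 : 0 < 1 - c by rewrite subr_gt0.
apply: le_trans (_ : \sum_(0 <= i < L * N) avoid_prob t i s <= _).
  rewrite (@big_cat_nat _ _ _ L 0 (L * N)) //= ?leq_pmulr ?(N_gt0 s) // lerDl.
  by apply: sumr_ge0.
rewrite ler_pdivlMr //; apply: le_trans (sum_avoid_prob_blocks s L) _.
by rewrite ler_piMr // lerBlDr lerDl exprn_ge0 ?(c_ge0 s).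
Qed.

Lemma mean_first_passage_lty s : (mean_first_passage K sup s t < +oo)%E.
Proof.
rewrite /mean_first_passage hit_prob_eq1 eqxx.
apply: (@le_lt_trans _ _ (N%:R / (1 - c))%:E); last exact: ltry.
apply: lime_le.
  by apply: is_cvg_nneseries => n _ _; rewrite lee_fin mulr_ge0 ?first_passage_ge0.
apply: nearW => -[|L]; rewrite sumEFin lee_fin.
  by rewrite big_geq // divr_ge0 // subr_ge0 ltW.
rewrite sum_mul_first_passage; apply: le_trans (sum_avoid_prob_le s L).
by rewrite lerBlDr lerDl mulr_ge0.
Qed.

End UniformAvoidBound.

End FirstPassage.

Lemma sum_indicator_ge (R : numDomainType) (I : finType) (T : eqType) (P : pred I)
    (f : I -> T) (w : I -> R) k :
  P k -> (forall k, 0 <= w k) -> w k <= \sum_(l | P l) (f k == f l)%:R * w l.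
Proof.
move=> Pk w_ge0; rewrite (bigD1 k) //= eqxx mul1r lerDl.
by apply: sumr_ge0 => l _; rewrite mulr_ge0.
Qed.

Lemma sum_indicator_seq (R : pzSemiRingType) (T : eqType) (r : seq T) a (w : R) :
  uniq r -> a \in r -> \sum_(u <- r) (u == a)%:R * w = w.
Proof.
move=> r_uniq a_in; rewrite (bigD1_seq a) //= eqxx mul1r big1 ?addr0 // => u /negbTE ->.
exact: mul0r.
Qed.

Lemma stochastic_row_ge_inv (R : realType) (M : nat) (Q : 'M[R]_M) i :
  stochastic_mx Q -> exists k, M%:R^-1 <= Q i k.
Proof.
move=> [_ Q_sum1]; apply/existsP; apply: contraT => /existsPn Q_lt.
have M_gt0 : (0 < M)%N by apply: leq_ltn_trans (ltn_ord i).
have : \sum_k Q i k < \sum_(k : 'I_M) M%:R^-1.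
  by apply: ltr_sum => [|k _]; [apply/hasP; exists i; rewrite ?mem_index_enum | rewrite ltNge Q_lt].
by rewrite Q_sum1 sumr_const card_ord -(mulr_natr M%:R^-1) mulVf ?ltxx // pnatr_eq0 -lt0n.
Qed.

Lemma mx_pow_gt0_reachable (R : realType) (M : nat) (Q : 'M[R]_M) n i j :
  (forall a b, 0 <= Q a b) -> 0 < (Q ^+ n) i j -> reachable (fun a b => Q a b) i j.
Proof.
move=> Q_ge0; elim: n j => [|n IH] j.
  by rewrite expr0 mxE; case: eqVneq => [-> _ | _]; [exact: rt_refl | rewrite ltxx].
rewrite exprSr -mulmxE mxE => sum_gt0.
have [k k_gt0] : exists k, 0 < (Q ^+ n) i k * Q k j.
  apply/existsP; apply: contraTT sum_gt0 => /existsPn term_le0.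
  by rewrite -leNgt sumr_le0 // => k _; rewrite leNgt term_le0.
have Qkj_gt0 : 0 < Q k j.
  by rewrite lt_def Q_ge0 andbT; apply: contraTneq k_gt0 => ->; rewrite mulr0 ltxx.
apply: rt_trans (IH k _) (rt_step _ _ _ _ Qkj_gt0).
by move: k_gt0; rewrite pmulr_lgt0.
Qed.

Section AlwaysTransmit.
Variables (R : realType) (M : nat) (Q : 'M[R]_M) (ps : R).
Hypothesis Q_stoch : stochastic_mx Q.
Hypotheses (ps_gt0 : 0 < ps) (ps_lt1 : ps < 1).

Local Notation K := (P_transmit Q ps).

Let Q_ge0 i k : 0 <= Q i k. Proof. exact: Q_stoch.1. Qed.
Let ps_ge0 : 0 <= ps. Proof. exact: ltW. Qed.
Let pf_ge0 : 0 <= 1 - ps. Proof. by rewrite subr_ge0 ltW. Qed.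
Local Hint Resolve Q_ge0 ps_ge0 pf_ge0 : core.
Local Hint Extern 0 (is_true (0 <= _ + _)) => apply: addr_ge0 : core.
Local Hint Extern 0 (is_true (0 <= _ * _)) => apply: mulr_ge0 : core.
Local Hint Extern 0 (is_true (0 <= \sum_(_ <- _ | _) _)) => apply: sumr_ge0 => ? _ : core.

Lemma P_transmit_ge0 s u : 0 <= K s u.
Proof. by case: s => [[i j] d]; rewrite /P_transmit; case: ifP => _; auto 10. Qed.

Lemma mem_aoce_succ_src (i j k : 'I_M) d : (k, i, 1%N) \in aoce_succ (i, j, d).
Proof. by rewrite !mem_cat (map_f (fun k => (k, i, 1%N))) ?mem_enum ?orbT. Qed.

Lemma mem_aoce_succ_est (i j k : 'I_M) d : (k, j, 1%N) \in aoce_succ (i, j, d).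
Proof. by rewrite !mem_cat (map_f (fun k => (k, j, 1%N))) ?mem_enum ?orbT. Qed.

Lemma P_transmit_supp s u : u \notin aoce_succ s -> K s u = 0.
Proof.
case: s => [[i j] d] uNsucc.
have neq a : a \in aoce_succ (i, j, d) -> (u == a) = false.
  by move=> a_in; apply/negbTE; apply: contraNneq uNsucc => ->.
rewrite /P_transmit; case: ifP => _; rewrite !neq ?inE ?eqxx ?orbT // !mul0r.
all: rewrite !big1 ?addr0 // => k _.
all: by rewrite neq ?mul0r ?mem_aoce_succ_src ?mem_aoce_succ_est.
Qed.

Lemma P_transmit_sum1 s : \sum_(u <- undup (aoce_succ s)) K s u = 1.
Proof.
have [_ Q_sum1] := Q_stoch.
have sum_ind a (w : R) : a \in aoce_succ s ->
    \sum_(u <- undup (aoce_succ s)) (u == a)%:R * w = w.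
  by move=> a_in; apply: sum_indicator_seq; rewrite ?undup_uniq ?mem_undup.
have sum_ind_big (P : pred 'I_M) f (w : 'I_M -> R) : (forall k, f k \in aoce_succ s) ->
    \sum_(u <- undup (aoce_succ s)) \sum_(k | P k) (u == f k)%:R * w k = \sum_(k | P k) w k.
  by move=> f_in; rewrite exchange_big; apply: eq_bigr => k _; apply: sum_ind.
case: s sum_ind sum_ind_big => [[i j] d] sum_ind sum_ind_big; rewrite /P_transmit.
case: (eqVneq i j) => [<- | ij] in sum_ind sum_ind_big *;
  set r := undup _ in sum_ind sum_ind_big *.
  rewrite /= big_split /= sum_ind ?inE ?eqxx // sum_ind_big => [|k]; last exact: mem_aoce_succ_src.
  by rewrite -(Q_sum1 i) [RHS](bigD1 i).
rewrite /= !big_split /= !sum_ind ?inE ?eqxx ?orbT //.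
rewrite !sum_ind_big => [|k|k]; rewrite ?mem_aoce_succ_src ?mem_aoce_succ_est //.
have split_j : \sum_(k | k != i) Q i k = Q i j + \sum_(k | (k != i) && (k != j)) Q i k.
  by rewrite (bigD1 j) 1?eq_sym.
have := Q_sum1 i; rewrite (bigD1 i) //= split_j -!mulr_suml split_j => sum1.
by apply: etrans sum1; ring.
Qed.

Definition fresh_state (a b : 'I_M) : aoce_state M :=
  if a == b then (a, a, 0%N) else (a, b, 1%N).

Lemma fresh_state_src a b : (fresh_state a b).1.1 = a.
Proof. by rewrite /fresh_state; case: ifP. Qed.

Lemma P_transmit_deliver s k : Q s.1.1 k * ps <= K s (fresh_state k s.1.1).
Proof.
case: s => [[i j] d] /=; have Qps_le : Q i k * ps <= Q i k by rewrite ler_piMr // ltW.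
rewrite /P_transmit /fresh_state; case: (eqVneq i j) => [_ | ij] /=.
  case: (eqVneq k i) => [-> | ki] in Qps_le *.
    by rewrite eqxx mul1r; apply: ler_wpDr; first by auto 10.
  apply: ler_wpDl; first by auto 10.
  apply: le_trans Qps_le _.
  exact: (sum_indicator_ge (fun l => (l, i, 1%N)) (P := fun l => l != i) (w := Q i) ki _).
do 3 (apply: ler_wpDr; first by auto 10).
case: (eqVneq k i) => [-> | ki].
  by rewrite eqxx mul1r; apply: ler_wpDr; first by auto 10.
apply: ler_wpDl; first by auto 10.
by apply: (sum_indicator_ge (fun l => (l, i, 1%N)) (P := fun l => l != i) ki) => l; auto.
Qed.

Lemma P_transmit_lost i j d k : i != j -> k != i ->
  Q i k * (1 - ps) <= K (i, j, d) (fresh_state k j).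
Proof.
move=> ij ki; rewrite /P_transmit /fresh_state (negbTE ij).
case: (eqVneq k j) => [-> | kj].
  apply: ler_wpDr; first by auto 10.
  by rewrite eqxx mul1r; apply: ler_wpDl; first by auto 10.
apply: ler_wpDl; first by auto 10.
apply: (sum_indicator_ge (fun l => (l, j, 1%N)) (P := fun l => (l != i) && (l != j))
  (w := fun l => Q i l * (1 - ps))); first by rewrite ki kj.
by move=> l; auto.
Qed.

Lemma P_transmit_age i j d : i != j -> Q i i * (1 - ps) <= K (i, j, d) (i, j, d.+1).
Proof.
move=> ij; rewrite /P_transmit (negbTE ij).
do 2 (apply: ler_wpDr; first by auto 10).
by rewrite eqxx mul1r; apply: ler_wpDl; first by auto 10.
Qed.

Lemma P_transmit_deliver_gt0 s k : 0 < Q s.1.1 k -> 0 < K s (fresh_state k s.1.1).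
Proof. by move=> Qk; apply: lt_le_trans (P_transmit_deliver s k); rewrite mulr_gt0. Qed.

Lemma reachable_fresh_from_src x b k :
  reachable (fun i j => Q i j) x b -> 0 < Q b k ->
  forall s, s.1.1 = x -> reachable K s (fresh_state k b).
Proof.
move=> xb; elim: (clos_rt_rt1n _ _ _ _ xb) => [y | y z b' yz _ IH] Qk s s_src.
  by apply: rt_step; rewrite -s_src; apply: P_transmit_deliver_gt0; rewrite s_src.
apply: rt_trans (IH Qk _ (fresh_state_src z y)).
by apply: rt_step; rewrite -s_src; apply: P_transmit_deliver_gt0; rewrite s_src.
Qed.

Lemma reachable_fresh_est x z b :
  reachable (fun i j => Q i j) x z -> reachable K (fresh_state x b) (fresh_state z b).
Proof.
move=> xz; elim: (clos_rt_rt1n _ _ _ _ xz) => [y | x' y z' x'y _ IH]; first exact: rt_refl.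
apply: rt_trans IH; case: (eqVneq y x') => [-> | yx']; first exact: rt_refl.
apply: rt_step; case: (eqVneq x' b) => [-> | x'b] in x'y *.
  by rewrite {1}/fresh_state eqxx; exact: (P_transmit_deliver_gt0 (s := (b, b, 0%N)) x'y).
rewrite {1}/fresh_state (negbTE x'b); apply: lt_le_trans (P_transmit_lost 1 x'b yx').
by rewrite mulr_gt0 // subr_gt0.
Qed.

Lemma reachable_age a b e : a != b -> 0 < Q a a -> reachable K (a, b, 1%N) (a, b, e.+1).
Proof.
move=> ab Qaa; elim: e => [|e IH]; first exact: rt_refl.
apply: rt_trans IH (rt_step _ _ _ _ _); apply: lt_le_trans (P_transmit_age e.+1 ab).
by rewrite mulr_gt0 // subr_gt0.
Qed.

Let Q_row_gt0 i : exists k, 0 < Q i k.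
Proof.
have [k Qk] := stochastic_row_ge_inv i Q_stoch; exists k; apply: lt_le_trans Qk.
by rewrite invr_gt0 ltr0n (leq_ltn_trans _ (ltn_ord i)).
Qed.

Hypothesis Q_irr : irreducible_mx Q.

Lemma reachable_valid s t : valid_state Q t -> reachable K s t.
Proof.
case: t => [[a b] e] t_valid.
have Q_reach x y : reachable (fun i j => Q i j) x y.
  by have [n Qn] := Q_irr x y; apply: mx_pow_gt0_reachable Qn.
have [k Qbk] := Q_row_gt0 b.
apply: rt_trans (reachable_fresh_from_src (Q_reach s.1.1 b) Qbk (erefl _)) _.
apply: rt_trans (reachable_fresh_est b (Q_reach k a)) _.
move: t_valid; rewrite /valid_state /fresh_state; case: (eqVneq a b) => [-> | ab] /=.
  by rewrite orbF => /eqP ->; apply: rt_refl.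
case/andP => e_gt0 /orP [Qaa | /eqP ->]; last exact: rt_refl.
by case: e e_gt0 => // e _; apply: reachable_age.
Qed.

Lemma P_transmit_avoid_prob_bound t : valid_state Q t ->
  exists N c, c < 1 /\ forall u, avoid_prob K (@aoce_succ M) t N u <= c.
Proof.
move=> t_valid; have M_gt0 : (0 < M)%N.
  by case: t t_valid => [[a _] _] _; apply: leq_ltn_trans (ltn_ord a).
apply: (avoid_prob_uniform_bound P_transmit_ge0 P_transmit_sum1 P_transmit_supp
  (w := fun p : 'I_M * 'I_M => fresh_state p.1 p.2) (d := ps / M%:R)).
- by rewrite divr_gt0 // ltr0n.
- move=> u; have [k Qk] := stochastic_row_ge_inv u.1.1 Q_stoch.
  exists (k, u.1.1); apply: le_trans (P_transmit_deliver u k).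
  by rewrite mulrC; apply: ler_wpM2r Qk; apply: ltW.
- move=> [k i]; have [k' Qk'] := Q_row_gt0 k.
  apply: (reachable_avoid_prob_lt1 P_transmit_ge0 P_transmit_sum1 P_transmit_supp
    (reachable_valid (fresh_state k' k) t_valid)).
  by have := @P_transmit_deliver_gt0 (fresh_state k i) k'; rewrite fresh_state_src; apply.
Qed.

Lemma P_transmit_first_passage s t : valid_state Q t ->
  hit_prob K (@aoce_succ M) s t = 1%E /\ (mean_first_passage K (@aoce_succ M) s t < +oo)%E.
Proof.
move=> /P_transmit_avoid_prob_bound [N [c [c_lt1 avoid_le_c]]]; split.
  exact: (hit_prob_eq1 P_transmit_ge0 P_transmit_sum1 P_transmit_supp avoid_le_c c_lt1).
exact: (mean_first_passage_lty P_transmit_ge0 P_transmit_sum1 P_transmit_supp avoid_le_c c_lt1).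
Qed.

End AlwaysTransmit.

Theorem lemma2 (R : realType) (M : nat) (Q : 'M[R]_M) (ps : R) :
  stochastic_mx Q ->
  irreducible_mx Q ->
  (exists i, 0 < Q i i) ->
  0 < ps < 1 ->
  let S := valid_state Q in
  let K := P_transmit Q ps in
  let sup := @aoce_succ M in
  [/\ irreducible_on K sup S,
      positive_recurrent_on K sup S &
      forall s t, S s -> S t -> (mean_first_passage K sup s t < +oo)%E].
Proof.
(* [exists i, 0 < Q i i] only makes the state space infinite; the proof does not need it. *)
move=> Q_stoch Q_irr _ /andP[ps_gt0 ps_lt1] S K sup.
have first_passage := P_transmit_first_passage Q_stoch ps_gt0 ps_lt1 Q_irr.
split=> [s t _ t_valid | s s_valid | s t _ t_valid]; last by have [] := first_passage s t t_valid.
  apply: (reachable_n_step_gt0 (P_transmit_ge0 Q_stoch ps_gt0 ps_lt1) (@P_transmit_supp _ _ Q ps)).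
  exact: reachable_valid.
exact: first_passage.
Qed.
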